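(* Let $X$ be a compact metric space, $f:X\to X$ continuous, $x\in X$, and suppose $L=\omega_f(x)$ is totally periodic. Let $Y=\overline{O_f(x)}=O_f(x)\cup L$, for $z\in Y$ let $[z]$ be the connected component of $Y$ containing $z$, let $Y/\mathcal{C}$ be the quotient space obtained by collapsing each connected component of $Y$ to a point, $\pi:Y\to Y/\mathcal{C}$, $\pi(y)=[y]$, the quotient map, and $\tilde f:Y/\mathcal{C}\to Y/\mathcal{C}$, $\tilde f([y])=[f(y)]$, the induced (well-defined, continuous) map. Then: (1) for every $n\in\mathbb{Z}_+$, $[f^n(x)]=\{f^n(x)\}$ and $[f^n(x)]$ is an isolated point of $Y/\mathcal{C}$; (2) if $y\in L$ then $[y]\subset L$; (3) for every $y\in Y$, $f([y])=[f(y)]$, and $f^n([y])=[f^n(y)]$ for all $n\in\mathbb{Z}_+$; (4) for every $z\in L$, $[z]$ is a periodic point of $\tilde f$; (5) if $L$ is infinite, then $\{[y]:\ y\in L\}=\omega_{\tilde f}([x])$.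
   Context: $O_f(x)=\{f^n(x):n\in\mathbb{Z}_+\}$ is the orbit of $x$. $\omega_f(x)=\{y:\ \exists\, n_i\to+\infty,\ f^{n_i}(x)\to y\}$, and it is totally periodic if each of its points $y$ satisfies $f^m(y)=y$ for some $m\ge1$. *)

From HB Require Import structures.
From mathcomp Require Import all_boot all_order all_algebra.
From mathcomp Require Import all_classical all_reals all_analysis.
Set Implicit Arguments. Unset Strict Implicit. Unset Printing Implicit Defensive.
Import Order.TTheory GRing.Theory Num.Theory.
Local Open Scope classical_set_scope.

Definition orbit_of {T : Type} (f : T -> T) (x : T) : set T :=
  [set iter n f x | n in [set: nat]].

Definition nat_to_infty (n : nat -> nat) : Prop :=
  forall N : nat, \forall i \near \oo, (N <= n i)%N.

Definition omega_lim {T : topologicalType} (f : T -> T) (x : T) : set T :=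
  [set y | exists n : nat -> nat,
     nat_to_infty n /\ (fun i => iter (n i) f x) @ \oo --> y].

Definition totally_periodic {T : Type} (f : T -> T) (L : set T) : Prop :=
  forall y, L y -> exists m : nat, (0 < m)%N /\ iter m f y = y.

Definition relopen {T : topologicalType} (Y A : set T) : Prop :=
  exists V : set T, open V /\ A = V `&` Y.

(* Y/C : points are the connected components of Y *)
Definition comp_space {T : topologicalType} (Y : set T) : set (set T) :=
  [set connected_component Y y | y in Y].

(* quotient topology on Y/C: U is open iff the union of its members
   (its preimage under pi) is open in Y *)
Definition qopen {T : topologicalType} (Y : set T) (U : set (set T)) : Prop :=
  U `<=` comp_space Y /\ relopen Y (\bigcup_(C in U) C).

(* the induced map f~([y]) = [f y]; on a component C = [y] the union below
   equals [f y] (well-definedness) *)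
Definition ftilde {T : topologicalType} (Y : set T) (f : T -> T)
  (C : set T) : set T :=
  \bigcup_(y in C) connected_component Y (f y).

Definition qconverges {T : topologicalType} (Y : set T)
  (u : nat -> set T) (C : set T) : Prop :=
  forall U, qopen Y U -> U C -> \forall i \near \oo, U (u i).

Definition q_omega_lim {T : topologicalType} (Y : set T)
  (g : set T -> set T) (c : set T) : set (set T) :=
  [set C | comp_space Y C /\ exists n : nat -> nat,
     nat_to_infty n /\ qconverges Y (fun i => iter (n i) g c) C].

From HB Require Import structures.
From mathcomp Require Import all_boot all_order all_algebra.
From mathcomp Require Import all_classical all_reals all_analysis.
From mathcomp Require Import zify.
Set Implicit Arguments. Unset Strict Implicit. Unset Printing Implicit Defensive.
Import Order.TTheory GRing.Theory Num.Theory.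
Local Open Scope classical_set_scope.
Local Open Scope ring_scope.

(* Every orbit point is isolated in Y: a periodic orbit point has a finite
   orbit, and an orbit point accumulated by other orbit points would lie in
   omega(x), hence be periodic.  So orbit points are singleton components, and
   a component meeting L lies in L.  Since points of L are periodic, f maps a
   component onto a component (a preimage of z in [f y] is an iterate of z),
   so the components in L are periodic for the induced map.  Finally, a limit
   of [f^{n_i} x] in Y/C is a component [c]; if c were an orbit point, then the
   open point {[c]} would force f^{n_i} x = c for a large n_i, so the orbit,
   and hence L, would be finite. *)

Lemma connected_component_relopen_set1 (T : topologicalType) (Y : set T) p :
  accessible_space T -> relopen Y [set p] -> Y p ->
  connected_component Y p = [set p].
Proof.
move=> acc [V [oV EV]] Yp; symmetry; apply: component_connected.
- by exists p.
- exists V => //; apply/seteqP; split.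
    move=> q ->; split; first exact: connected_component_refl.
    by have : [set p] p by []; rewrite EV => -[].
  move=> q [/connected_component_sub Yq Vq].
  by have : (V `&` Y) q by []; rewrite -EV.
- exists [set p]; first exact: accessible_closed_set1.
  apply/seteqP; split; last by move=> q [].
  by move=> q ->; split => //; exact: connected_component_refl.
Qed.

Section ComponentDynamics.
Variables (T : topologicalType) (Y : set T) (f : T -> T).
Hypotheses (f_cont : continuous f) (fY : forall y, Y y -> Y (f y)).

Local Notation comp := (connected_component Y).

Lemma iter_invariant n y : Y y -> Y (iter n f y).
Proof. by move=> Yy; elim: n => // n IH; exact: fY. Qed.

Lemma image_connected_component_sub y : Y y -> f @` comp y `<=` comp (f y).
Proof.
move=> Yy; apply: connected_component_max.
- by exists y => //; exact: connected_component_refl.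
- by move=> _ [u /connected_component_sub Yu <-]; exact: fY.
- apply: connected_continuous_connected; first exact: component_connected.
  exact: continuous_subspaceT.
Qed.

Lemma iter_connected_component n y u :
  Y y -> comp y u -> comp (iter n f y) (iter n f u).
Proof.
move=> Yy yu; elim: n => // n IH /=.
exact: (image_connected_component_sub (iter_invariant n Yy) (imageP f IH)).
Qed.

Lemma ftilde_connected_component y : Y y -> ftilde Y f (comp y) = comp (f y).
Proof.
move=> Yy; apply/seteqP; split.
  move=> w [u yu uw].
  by rewrite (same_connected_component (image_connected_component_sub Yy (imageP f yu))).
by move=> w yw; exists y => //; exact: connected_component_refl.
Qed.

Lemma iter_ftilde_connected_component n y :
  Y y -> iter n (ftilde Y f) (comp y) = comp (iter n f y).
Proof.
move=> Yy; elim: n => // n IH /=.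
by rewrite IH ftilde_connected_component //; exact: iter_invariant.
Qed.

End ComponentDynamics.

Section OmegaLimit.
Variables (T : topologicalType) (f : T -> T) (x : T).

Lemma orbit_sub_closure n : closure (orbit_of f x) (iter n f x).
Proof. by apply: subset_closure; exists n. Qed.

Lemma omega_lim_sub_closure : omega_lim f x `<=` closure (orbit_of f x).
Proof.
move=> z [n [_ nz]] B zB.
have [i Bi] := @filter_ex nat \oo _ (fun i => B (iter (n i) f x)) (nz B zB).
by exists (iter (n i) f x); split => //; exists (n i).
Qed.

Hypothesis f_cont : continuous f.

Lemma closure_orbit_invariant z :
  closure (orbit_of f x) z -> closure (orbit_of f x) (f z).
Proof.
move=> Yz B fzB.
have [_ [[k _ <-]] kB] := Yz _ (f_cont fzB).
by exists (iter k.+1 f x); split => //; exists k.+1.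
Qed.

Lemma omega_lim_invariant z : omega_lim f x z -> omega_lim f x (f z).
Proof.
move=> [n [n_oo nz]]; exists (fun i => (n i).+1); split.
  by move=> N; apply: filterS (n_oo N) => i /= /leqW.
by apply: cvg_comp; [exact: nz | exact: f_cont].
Qed.

End OmegaLimit.
Arguments orbit_sub_closure {T f x} n.

Section TotallyPeriodicOmegaLimit.
Variables (R : realType) (X : metricType R) (f : X -> X) (x : X).

Local Notation O := (orbit_of f x).
Local Notation Y := (closure (orbit_of f x)).
Local Notation L := (omega_lim f x).
Local Notation comp := (connected_component Y).

Lemma omega_lim_of_close_late z :
  (forall N (e : R), 0 < e -> exists k, (N <= k)%N /\ mdist z (iter k f x) < e) ->
  L z.
Proof.
move=> close.
have /choice [n nP] : forall i : nat,
    exists k, (i <= k)%N /\ mdist z (iter k f x) < i.+1%:R^-1.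
  by move=> i; apply: close; rewrite invr_gt0 ltr0n.
exists n; split.
  move=> N; near=> i; apply: leq_trans (nP i).1; near: i; exact: nbhs_infty_ge.
apply/cvg_ballP => e e0; near=> i; rewrite ballEmdist /=.
apply: lt_trans (nP i).2 _; near: i.
exact: (near_infty_natSinv_lt (PosNum e0)).
Unshelve. all: by end_near.
Qed.

Lemma omega_lim_of_close_other z :
  (forall e : R, 0 < e -> exists k, iter k f x != z /\ mdist z (iter k f x) < e) ->
  L z.
Proof.
move=> close; apply: omega_lim_of_close_late.
suff late : forall N (e : R), 0 < e ->
    exists k, [/\ (N <= k)%N, iter k f x != z & mdist z (iter k f x) < e].
  by move=> N e e0; have [k [? ? ?]] := late N e e0; exists k.
elim=> [|N IH] e e0; first by have [k [? ?]] := close e e0; exists k.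
(* Shrinking e below the distance to iter N f x rules out k = N. *)
case: (eqVneq (iter N f x) z) => [Nz|Nz].
  have [k [Nk kz dk]] := IH e e0; exists k; split => //.
  rewrite ltn_neqAle Nk andbT; apply/eqP => Nk'.
  by move: kz; rewrite -Nk' Nz eqxx.
have dN : 0 < mdist z (iter N f x) by rewrite mdist_gt0 eq_sym.
have r0 : 0 < Order.min e (mdist z (iter N f x)) by rewrite lt_min e0 dN.
have [k [Nk kz dk]] := IH _ r0.
exists k; split => //; last by apply: lt_le_trans dk _; rewrite ge_min lexx.
rewrite ltn_neqAle Nk andbT; apply/eqP => Nk'.
by move: dk; rewrite -Nk' lt_min ltxx andbF.
Qed.

Lemma orbit_prefix_away K p : exists2 e : R, 0 < e &
  forall j, (j < K)%N -> iter j f x != p -> e <= mdist p (iter j f x).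
Proof.
elim: K => [|K [e e0 away]]; first by exists 1 => // j.
case: (eqVneq (iter K f x) p) => [Kp|Kp].
  exists e => // j; rewrite ltnS leq_eqVlt => /orP[/eqP ->|]; last exact: away.
  by rewrite Kp eqxx.
have dK : 0 < mdist p (iter K f x) by rewrite mdist_gt0 eq_sym.
exists (Order.min e (mdist p (iter K f x))); first by rewrite lt_min e0 dK.
move=> j; rewrite ltnS leq_eqVlt => /orP[/eqP ->|jK] jp; first by rewrite ge_min lexx orbT.
by rewrite ge_min away.
Qed.

Lemma iter_cycle a b : (a < b)%N -> iter a f x = iter b f x ->
  forall k, exists2 j, (j < b)%N & iter k f x = iter j f x.
Proof.
move=> ab ab_eq; elim/ltn_ind => k IH.
case: (ltnP k b) => kb; first by exists k.
have -> : iter k f x = iter (k - b + a) f x by rewrite iterD ab_eq -iterD subnK.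
apply: IH; lia.
Qed.

Lemma closure_orbit_omega_lim z : Y z -> ~ O z -> L z.
Proof.
move=> Yz Oz; apply: omega_lim_of_close_other => e e0.
have [_ [[k _ <-]]] := Yz _ (nbhsx_ballx z _ e0).
rewrite ballEmdist /= => dk; exists k; split => //.
by apply/eqP => kz; apply: Oz; exists k.
Qed.

Lemma finite_omega_lim_of_cycle a b :
  (a < b)%N -> iter a f x = iter b f x -> finite_set L.
Proof.
move=> ab ab_eq.
apply: sub_finite_set (finite_image (fun j => iter j f x) (finite_II b)).
move=> z Lz; apply: contrapT => zb.
have [e e0 away] := orbit_prefix_away b z.
have [n [_ nz]] := Lz.
have [i ni] := @filter_ex nat \oo _ (fun i => ball z e (iter (n i) f x))
  (nz _ (nbhsx_ballx z e e0)).
have [j jb nj] := iter_cycle ab ab_eq (n i).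
move: ni; rewrite nj ballEmdist /= => dj.
have jz : iter j f x != z by apply/eqP => jz; apply: zb; exists j.
by have := away j jb jz; rewrite leNgt dj.
Qed.

Hypothesis L_periodic : totally_periodic f L.

Lemma orbit_point_isolated n : exists2 e : R, 0 < e &
  forall k, iter k f x != iter n f x -> e <= mdist (iter n f x) (iter k f x).
Proof.
have [Ln|Ln] := pselect (L (iter n f x)).
  have [m [m0 m_per]] := L_periodic Ln.
  have [e e0 away] := orbit_prefix_away (m + n) (iter n f x).
  have n_lt : (n < m + n)%N by rewrite -[ltnLHS]add0n ltn_add2r.
  have n_eq : iter n f x = iter (m + n) f x by rewrite iterD m_per.
  exists e => // k; have [j jb ->] := iter_cycle n_lt n_eq k; exact: away.
apply: contrapT => not_iso; apply: Ln; apply: omega_lim_of_close_other => e e0.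
apply: contrapT => far; apply: not_iso; exists e => // k kn.
by rewrite leNgt; apply/negP => dk; apply: far; exists k.
Qed.

Lemma relopen_orbit_point n : relopen Y [set iter n f x].
Proof.
set p := iter n f x; have [e e0 iso] := orbit_point_isolated n.
exists (ball p e)°; split; first exact: open_interior.
apply/seteqP; split.
  move=> q ->; split; last exact: orbit_sub_closure.
  by apply: nbhs_singleton; apply: nbhs_interior; exact: nbhsx_ballx.
move=> q [/interior_subset + Yq]; rewrite ballEmdist /= => dpq.
apply: contrapT => /eqP qp.
have dpq0 : 0 < mdist p q by rewrite mdist_gt0 eq_sym.
(* An orbit point this close to q differs from p and lies within e of p. *)
have r0 : 0 < Order.min (e - mdist p q) (mdist p q) by rewrite lt_min subr_gt0 dpq dpq0.
have [_ [[k _ <-]]] := Yq _ (nbhsx_ballx q _ r0).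
rewrite ballEmdist /= lt_min => /andP[dqk_e dqk_p].
have kp : iter k f x != p by apply/eqP => kp; move: dqk_p; rewrite kp metric_sym ltxx.
have := iso k kp; rewrite leNgt => /negP; apply.
by apply: le_lt_trans (metric_triangle p q (iter k f x)) _; rewrite -ltrBrDl.
Qed.

Lemma component_orbit_point n : comp (iter n f x) = [set iter n f x].
Proof.
apply: connected_component_relopen_set1; last exact: orbit_sub_closure.
  exact/hausdorff_accessible/metric_hausdorff.
exact: relopen_orbit_point.
Qed.

Lemma qopen_orbit_point n : qopen Y [set comp (iter n f x)].
Proof.
split; first by move=> C ->; exists (iter n f x) => //; exact: orbit_sub_closure.
by rewrite bigcup_set1 component_orbit_point; exact: relopen_orbit_point.
Qed.

Lemma component_omega_lim_sub y : L y -> comp y `<=` L.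
Proof.
move=> Ly w yw; have Yw := connected_component_sub yw.
have [[k _ kw]|Ow] := pselect (O w); last exact: closure_orbit_omega_lim.
have := connected_component_refl (omega_lim_sub_closure Ly).
by rewrite (same_connected_component yw) -kw component_orbit_point => <-.
Qed.

Hypothesis f_cont : continuous f.

Local Notation Y_invariant := (closure_orbit_invariant f_cont).

Lemma image_component y : Y y -> f @` comp y = comp (f y).
Proof.
move=> Yy; apply/seteqP; split; first exact: (image_connected_component_sub f_cont Y_invariant Yy).
move=> z fyz; have [[k _ kfy]|Ofy] := pselect (O (f y)).
  move: fyz; rewrite -kfy component_orbit_point kfy => ->.
  by exists y => //; exact: connected_component_refl.
have Ly : L y.
  by apply: closure_orbit_omega_lim => // -[k _ ky]; apply: Ofy; exists k.+1; rewrite //= ky.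
have Lz : L z := component_omega_lim_sub (omega_lim_invariant f_cont Ly) fyz.
have [m [m0 m_per]] := L_periodic Ly.
have [k [k0 k_per]] := L_periodic Lz.
(* z has the common period k * m, so z = f (iter (k * m).-1 f z), with
   iter (k * m).-1 f z in [iter (k * m) f y] = [y]. *)
have km0 : (0 < k * m)%N by rewrite muln_gt0 k0 m0.
exists (iter (k * m).-1 f z).
  have := iter_connected_component f_cont Y_invariant (k * m).-1 (Y_invariant Yy) fyz.
  by rewrite -iterSr prednK // iterM iter_fix.
by rewrite -iterS prednK // mulnC iterM iter_fix.
Qed.

Lemma iter_image_component n y : Y y -> iter n f @` comp y = comp (iter n f y).
Proof.
move=> Yy; elim: n => [|n IH]; first exact: image_id.
rewrite -[iter n.+1 f]/(f \o iter n f) -image_comp IH /=.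
exact/image_component/(iter_invariant Y_invariant).
Qed.

Lemma component_omega_lim_periodic z : L z ->
  exists m : nat, (0 < m)%N /\ iter m (ftilde Y f) (comp z) = comp z.
Proof.
move=> Lz; have [m [m0 mz]] := L_periodic Lz; exists m; split => //.
rewrite (iter_ftilde_connected_component f_cont Y_invariant) ?mz //.
exact: omega_lim_sub_closure.
Qed.

Lemma omega_lim_component_q_omega y :
  L y -> q_omega_lim Y (ftilde Y f) (comp x) (comp y).
Proof.
move=> Ly; have Yy := omega_lim_sub_closure Ly.
split; first by exists y.
have [n [n_oo ny]] := Ly; exists n; split => // U [Usub [V [oV UV]]] Uy.
have Vy : V y.
  have : (\bigcup_(C in U) C) y by exists (comp y) => //; exact: connected_component_refl.
  by rewrite UV => -[].
have near_V : \forall i \near \oo, V (iter (n i) f x).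
  exact: ny (open_nbhs_nbhs (conj oV Vy)).
apply: filterS near_V => i Vi.
rewrite (iter_ftilde_connected_component f_cont Y_invariant _ (orbit_sub_closure 0 : Y x)).
have [C UC Cni] : (\bigcup_(C in U) C) (iter (n i) f x).
  by rewrite UV; split => //; exact: orbit_sub_closure.
have [c _ cC] := Usub C UC.
by move: Cni; rewrite -cC => /same_connected_component <-; rewrite cC.
Qed.

Lemma q_omega_lim_component : ~ finite_set L ->
  q_omega_lim Y (ftilde Y f) (comp x) `<=` [set comp y | y in L].
Proof.
move=> L_inf _ [[c Yc <-] [n [n_oo c_lim]]].
have [Lc|Lc] := pselect (L c); first by exists c.
have [k _ kc] : O c by apply: contrapT => Oc; apply: Lc; exact: closure_orbit_omega_lim.
(* {[c]} is open in Y/C, so the orbit comes back to c = iter k f x after time k. *)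
subst c; exfalso; apply: L_inf.
have [i [ni_k k_ni]] := filter_ex (filterI (c_lim _ (qopen_orbit_point k) erefl) (n_oo k.+1)).
move: ni_k; rewrite /= (iter_ftilde_connected_component f_cont Y_invariant _ (orbit_sub_closure 0 : Y x)).
rewrite !component_orbit_point => ni_k.
apply: (finite_omega_lim_of_cycle k_ni).
by have : [set iter k f x] (iter (n i) f x) by rewrite -ni_k.
Qed.

End TotallyPeriodicOmegaLimit.

Theorem lemma2p7 (R : realType) (X : metricType R) (f : X -> X) (x : X) :
  compact [set: X] -> continuous f ->
  let L := omega_lim f x in
  totally_periodic f L ->
  let Y := closure (orbit_of f x) in
  let comp := connected_component Y in
  let ft := ftilde Y f in
  (* (1) *)
  (forall n : nat, comp (iter n f x) = [set iter n f x] /\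
                   qopen Y [set comp (iter n f x)]) /\
  (* (2) *)
  (forall y, L y -> comp y `<=` L) /\
  (* (3) *)
  (forall y, Y y -> f @` comp y = comp (f y) /\
     forall n : nat, iter n f @` comp y = comp (iter n f y)) /\
  (* (4) *)
  (forall z, L z -> exists m : nat, (0 < m)%N /\ iter m ft (comp z) = comp z) /\
  (* (5) *)
  (~ finite_set L -> [set comp y | y in L] = q_omega_lim Y ft (comp x)).
Proof.
move=> _ f_cont L L_per Y comp ft.
split; first by move=> n; split; [exact: component_orbit_point | exact: qopen_orbit_point].
split; first by move=> y; exact: component_omega_lim_sub.
split; first by move=> y Yy; split; [exact: image_component | move=> n; exact: iter_image_component].
split; first exact: component_omega_lim_periodic.
move=> L_inf; apply/seteqP; split; last exact: q_omega_lim_component.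
by move=> _ [y Ly <-]; exact: omega_lim_component_q_omega.
Qed.
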